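(* Assume $\sigma_1(x)=\tfrac12\sigma_1''(0)(x-a_1)(x-b_1)$ and $\sigma_2(x)=\tfrac12\sigma_2''(0)(x-a_2)(x-b_2)$ with $\sigma_1''(0)\ne0$, $\sigma_2''(0)\ne0$ and real zeros satisfying $a_2<a_1<0<b_1<b_2$, and assume $0<q^2\Lambda_q<1$, where $\Lambda_q=q^{-2}\Big[1+\frac{(1-q^{-1})\tau'(0)}{\frac12\sigma_1''(0)}\Big]$. Put $a=a_1$, $b=b_1$ and $$\rho(x)=\frac{(qx/a,\,qx/b;q)_\infty}{(x/a_2,\,x/b_2;q)_\infty}.$$ Then there exist polynomials $P_n$, $n\in\mathbb{N}_0$, with $P_n$ of degree $n$ a solution of the q-EHT with $\lambda=\lambda_n$, and nonzero constants $d_n^2$, such that for all $m,n\in\mathbb{N}_0$ $$\int_a^b P_n(x)P_m(x)\rho(x)\,d_qx=d_n^2\delta_{mn},$$ i.e. orthogonality with respect to $\rho$ supported on $\{q^ka\}_{k\in\mathbb{N}_0}\cup\{q^kb\}_{k\in\mathbb{N}_0}$.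
   Context: Throughout $0<q<1$. For a function $y$ and $\zeta\in\{q,q^{-1}\}$, $D_\zeta y(x)=\frac{y(x)-y(\zeta x)}{(1-\zeta)x}$ for $x\ne0$ and $D_\zeta y(0)=y'(0)$; $[n]_q=\frac{1-q^n}{1-q}$. Let $\sigma_1$ be a real polynomial of degree at most two, $\tau(x)=\tau'(0)x+\tau(0)$ a real polynomial with $\tau'(0)\ne0$, and $\sigma_2(x):=q[\sigma_1(x)+(1-q^{-1})x\tau(x)]$. The q-EHT with parameter $n$ is $\sigma_1(x)D_{q^{-1}}D_qy(x)+\tau(x)D_qy(x)+\lambda_ny(x)=0$, $\lambda_n=-[n]_q\big(\tau'(0)+\tfrac12[n-1]_{q^{-1}}\sigma_1''(0)\big)$. $(\alpha;q)_\infty=\prod_{k\ge0}(1-\alpha q^k)$, $(\alpha_1,\dots,\alpha_r;q)_\infty=\prod_i(\alpha_i;q)_\infty$. For $a<0<b$, $\int_a^b f(x)\,d_qx=(1-q)b\sum_{j\ge0}q^jf(q^jb)+(1-q)(-a)\sum_{j\ge0}q^jf(q^ja)$. *)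

From Stdlib Require Import Reals.
From Coquelicot Require Import Coquelicot.
Open Scope R_scope.

Fixpoint qpoch_fin (alpha q : R) (n : nat) : R :=
  match n with
  | O => 1
  | S m => qpoch_fin alpha q m * (1 - alpha * q ^ m)
  end.

Definition qpoch_inf (alpha q : R) : R :=
  real (Lim_seq (fun n => qpoch_fin alpha q n)).

Definition qnum (q : R) (n : Z) : R := (1 - powerRZ q n) / (1 - q).

Definition Dq (zeta : R) (y : R -> R) (x : R) : R :=
  if Req_EM_T x 0 then Derive y 0
  else (y x - y (zeta * x)) / ((1 - zeta) * x).

Definition jackson_right (q : R) (f : R -> R) (b : R) : nat -> R :=
  fun j => q ^ j * f (q ^ j * b).

(* Jackson q-integral  int_a^b f(x) d_q x  for a < 0 < b *)
Definition jackson (q : R) (f : R -> R) (a b : R) : R :=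
  (1 - q) * b * Series (jackson_right q f b)
  + (1 - q) * (- a) * Series (jackson_right q f a).

Definition jackson_ex (q : R) (f : R -> R) (a b : R) : Prop :=
  ex_series (jackson_right q f b) /\ ex_series (jackson_right q f a).

Definition is_poly_deg (P : R -> R) (n : nat) : Prop :=
  exists c : nat -> R, c n <> 0 /\
    forall x, P x = sum_f_R0 (fun k => c k * x ^ k) n.

From Stdlib Require Import Reals.
From Coquelicot Require Import Coquelicot.
From Stdlib Require Import Lra Lia Psatz Classical FunctionalExtensionality.
Open Scope R_scope.

(* The q-difference operator maps x^k into the span of x^k, x^(k+1), x^(k+2), acting on the
   top degree by the factor -A_k; the hypothesis 0 < q^2 Lambda_q < 1 makes the A_k pairwise
   distinct, so a monic eigenpolynomial P_n of each degree is obtained by solving the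
   triangular recursion downwards from x^n.
   The weight rho satisfies the Pearson equation q rho(qx) sigma1(qx) = rho(x) sigma2(x) on
   the lattices q^k a and q^k b, so for n <> m the Jackson partial sums of P_n P_m rho over
   q^k c (c = a or b) telescope to a boundary flux divided by c, the other boundary term
   vanishing because sigma1(c) = 0.  As k -> oo the flux tends to a limit L independent of c,
   hence the integral is (1-q) b L/b - (1-q) a L/a = 0 up to a common factor.  The squared
   norms are positive because rho > 0 on the lattices and P_n cannot vanish at every q^k b. *)

Lemma pow_in_0_1 q n : 0 < q < 1 -> 0 < q ^ n <= 1.
Proof.
  intros Hq; split; [apply pow_lt; lra|].
  induction n; simpl; nra.
Qed.

Lemma pow_mul_lt_1 q n k : 0 < q < 1 -> k < 1 -> q ^ n * k < 1.
Proof. intros Hq Hk; destruct (pow_in_0_1 q n Hq); destruct (Rle_lt_dec k 0); nra. Qed.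

Lemma is_lim_seq_ex_derive (f : R -> R) (u : nat -> R) l :
  ex_derive f l -> is_lim_seq u l -> is_lim_seq (fun N => f (u N)) (f l).
Proof.
  intros Hf Hu; apply is_lim_seq_continuous; [|auto].
  apply continuity_pt_filterlim; exact (ex_derive_continuous f l Hf).
Qed.

Lemma is_lim_seq_geom_mul q c : 0 < q < 1 -> is_lim_seq (fun N => q ^ N * c) 0.
Proof.
  intros Hq; replace (Finite 0) with (Finite (0 * c)) by (f_equal; ring).
  apply is_lim_seq_mult'; [apply is_lim_seq_geom; rewrite Rabs_pos_eq; lra|].
  apply is_lim_seq_const.
Qed.

Lemma exp_le_mono x y : x <= y -> exp x <= exp y.
Proof. intros [H|H]; [left; apply exp_increasing; auto|subst; lra]. Qed.

Lemma is_lim_seq_unique_R (u : nat -> R) (l1 l2 : R) :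
  is_lim_seq u l1 -> is_lim_seq u l2 -> l1 = l2.
Proof.
  intros H1 H2; apply is_lim_seq_unique in H1, H2.
  rewrite H1 in H2; now injection H2.
Qed.

Lemma div_lt_1 x d : (0 < d /\ x < d) \/ (d < 0 /\ d < x) -> x / d < 1.
Proof.
  intros H; assert (Hd : d <> 0) by lra.
  replace (x / d) with (1 - (d - x) / d) by (field; auto).
  destruct H as [[H1 H2]|[H1 H2]].
  - assert (0 < (d - x) / d) by (apply Rdiv_lt_0_compat; lra); lra.
  - replace ((d - x) / d) with ((x - d) / - d) by (field; auto).
    assert (0 < (x - d) / - d) by (apply Rdiv_lt_0_compat; lra); lra.
Qed.

Lemma is_series_of_sum_f_R0 (u : nat -> R) (l : R) :
  is_lim_seq (fun N => sum_f_R0 u N) l -> is_series u l.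
Proof.
  intros H; apply is_lim_seq_ext with (v := sum_n u) in H; [exact H|].
  intros; now rewrite sum_n_Reals.
Qed.

Lemma ex_series_geom_mul_cvg q (u : nat -> R) (l : R) : 0 < q < 1 ->
  is_lim_seq u l -> ex_series (fun j => q ^ j * u j).
Proof.
  intros Hq Hu; apply is_lim_seq_spec in Hu.
  destruct (Hu (mkposreal 1 Rlt_0_1)) as [N HN]; simpl in HN.
  apply (ex_series_incr_n _ N).
  apply (@ex_series_le R_AbsRing R_CompleteNormedModule _ (fun k => q ^ N * (Rabs l + 1) * q ^ k)).
  - intros k; change norm with Rabs; simpl.
    specialize (HN (N + k)%nat ltac:(lia)).
    rewrite pow_add, !Rabs_mult, !Rabs_pos_eq by (left; apply pow_lt; lra).
    pose proof (Rabs_triang_inv (u (N + k)%nat) l).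
    assert (0 < q ^ N * q ^ k) by (apply Rmult_lt_0_compat; apply pow_lt; lra); nra.
  - apply (@ex_series_scal_l R_AbsRing R_NormedModule).
    apply ex_series_geom; rewrite Rabs_pos_eq; lra.
Qed.

Lemma is_series_ge_term (u : nat -> R) (l : R) N :
  is_series u l -> (forall n, 0 <= u n) -> u N <= l.
Proof.
  intros H Hp.
  assert (Hs : is_lim_seq (fun N => sum_f_R0 u N) l)
    by (apply is_lim_seq_ext with (sum_n u); [intros; apply sum_n_Reals|exact H]).
  apply Rle_trans with (sum_f_R0 u N).
  - destruct N; simpl; [lra|]; pose proof (cond_pos_sum u N Hp); lra.
  - apply (is_lim_seq_incr_compare _ _ Hs); intros n; simpl; specialize (Hp (S n)); lra.
Qed.

Lemma sum_f_R0_zero (f : nat -> R) N : (forall k, f k = 0) -> sum_f_R0 f N = 0.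
Proof. intros H; induction N; simpl; rewrite ?IHN, H; ring. Qed.

Lemma sum_f_R0_shift2 (c al be ga : nat -> R) x N :
  be 0%nat = 0 -> ga 0%nat = 0 -> ga 1%nat = 0 ->
  sum_f_R0 (fun k => c k * x ^ k * (al k * x ^ 2 + be k * x + ga k)) N
  = sum_f_R0 (fun k => (c k * al k + c (S k) * be (S k) + c (S (S k)) * ga (S (S k)))
                        * x ^ S (S k)) N
    - c (S N) * (be (S N) * x ^ S (S N) + ga (S N) * x ^ S N)
    - c (S (S N)) * ga (S (S N)) * x ^ S (S N).
Proof.
  intros H0 H1 H2; induction N as [|N IHN]; [simpl; rewrite H0, H1, H2; ring|].
  rewrite tech5, IHN, tech5; simpl; ring.
Qed.

Lemma ex_derive_zero_punctured (f : R -> R) :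
  ex_derive f 0 -> (forall x, x <> 0 -> f x = 0) -> f 0 = 0.
Proof.
  intros Hf H0.
  apply (is_lim_seq_unique_R (fun N => f ((/ 2) ^ N * 1))).
  - apply is_lim_seq_ex_derive, is_lim_seq_geom_mul; auto; lra.
  - apply is_lim_seq_ext with (fun _ => 0); [|apply is_lim_seq_const].
    intros N; symmetry; apply H0, Rmult_integral_contrapositive; split; [apply pow_nonzero|]; lra.
Qed.

Definition peval (c : nat -> R) (n : nat) (x : R) : R :=
  sum_f_R0 (fun k => c k * x ^ k) n.

Definition shiftc (c : nat -> R) (k : nat) : R := c (S k).

Lemma peval_S c n x : peval c (S n) x = c 0%nat + x * peval (shiftc c) n x.
Proof.
  unfold peval, shiftc; induction n as [|n IHn]; [simpl; ring|].
  rewrite tech5, IHn, tech5; simpl; ring.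
Qed.

Lemma peval_0 c n : peval c n 0 = c 0%nat.
Proof. destruct n; [unfold peval; simpl; ring|rewrite peval_S; ring]. Qed.

Lemma peval_zero_tail c n m x : (forall k, (n < k)%nat -> c k = 0) ->
  peval c (n + m) x = peval c n x.
Proof.
  intros Hc; induction m as [|m IHm]; [now rewrite Nat.add_0_r|].
  rewrite Nat.add_succ_r; unfold peval in *; simpl; rewrite IHm, Hc by lia; ring.
Qed.

Lemma ex_derive_peval c n x : ex_derive (peval c n) x.
Proof.
  revert c x; induction n as [|n IHn]; intros c x.
  - apply ex_derive_ext with (fun _ => c 0%nat); [intros; unfold peval; simpl; ring|].
    apply ex_derive_const.
  - apply ex_derive_ext with (fun y => c 0%nat + y * peval (shiftc c) n y).
    { intros; now rewrite peval_S. }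
    auto_derive; apply IHn.
Qed.

Lemma is_lim_seq_peval_0 c n (u : nat -> R) :
  is_lim_seq u 0 -> is_lim_seq (fun N => peval c n (u N)) (c 0%nat).
Proof.
  intros Hu; rewrite <- (peval_0 c n); apply is_lim_seq_ex_derive; auto.
  apply ex_derive_peval.
Qed.

Lemma Derive_peval_0 c n : Derive (peval c (S n)) 0 = c 1%nat.
Proof.
  rewrite (Derive_ext _ (fun y => c 0%nat + y * peval (shiftc c) n y))
    by (intros; now rewrite peval_S).
  rewrite Derive_plus, Derive_const, Derive_mult, Derive_id, peval_0.
  - unfold shiftc; ring.
  - apply ex_derive_id.
  - apply ex_derive_peval.
  - apply ex_derive_const.
  - apply ex_derive_mult; [apply ex_derive_id|apply ex_derive_peval].
Qed.

(* coefficients of the q-derivative: D_z x^(k+1) = [k+1]_z x^k *)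
Definition qderiv_coef (z : R) (c : nat -> R) (k : nat) : R :=
  c (S k) * ((1 - z ^ (S k)) / (1 - z)).

Lemma peval_sub_dilate z c n x : z <> 1 ->
  peval c (S n) x - peval c (S n) (z * x) = (1 - z) * x * peval (qderiv_coef z c) n x.
Proof.
  intros Hz; assert (1 - z <> 0) by lra.
  unfold peval, qderiv_coef; induction n as [|n IHn]; [simpl; field; auto|].
  change (sum_f_R0 (fun k => c k * x ^ k) (S n) + c (S (S n)) * x ^ S (S n)
    - (sum_f_R0 (fun k => c k * (z * x) ^ k) (S n) + c (S (S n)) * (z * x) ^ S (S n))
    = (1 - z) * x * (sum_f_R0 (fun k => c (S k) * ((1 - z ^ S k) / (1 - z)) * x ^ k) n
       + c (S (S n)) * ((1 - z ^ S (S n)) / (1 - z)) * x ^ S n)).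
  rewrite Rmult_plus_distr_l, <- IHn, Rpow_mult_distr; simpl; field; auto.
Qed.

Lemma Dq_peval z c n : z <> 1 -> Dq z (peval c (S n)) = peval (qderiv_coef z c) n.
Proof.
  intros Hz; apply functional_extensionality; intros x.
  unfold Dq; destruct (Req_EM_T x 0) as [->|Hx].
  - rewrite Derive_peval_0, peval_0; unfold qderiv_coef; simpl; field; lra.
  - rewrite peval_sub_dilate by auto; field; split; auto; lra.
Qed.

(* A polynomial with nonzero top coefficient cannot vanish on a sequence tending to 0:
   the constant term would vanish, and dividing by x lowers the degree. *)
Lemma peval_geom_nonzero q b n (c : nat -> R) : 0 < q < 1 -> b <> 0 -> c n <> 0 ->
  exists j, peval c n (q ^ j * b) <> 0.
Proof.
  intros Hq Hb; revert c; induction n as [|n IHn]; intros c Hc.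
  - exists 0%nat; unfold peval; simpl; rewrite Rmult_1_r; auto.
  - apply NNPP; intros Hn.
    assert (Hall : forall j, peval c (S n) (q ^ j * b) = 0)
      by (intros j; apply NNPP; intros H; apply Hn; exists j; auto).
    assert (Hc0 : c 0%nat = 0).
    { apply (is_lim_seq_unique_R (fun j => peval c (S n) (q ^ j * b))).
      - apply is_lim_seq_peval_0, is_lim_seq_geom_mul; auto.
      - apply is_lim_seq_ext with (fun _ => 0); [intros; now rewrite Hall|apply is_lim_seq_const]. }
    destruct (IHn (shiftc c) Hc) as [j Hj]; apply Hj.
    specialize (Hall j); rewrite peval_S, Hc0, Rplus_0_l in Hall.
    apply Rmult_integral in Hall as [H|H]; auto.
    exfalso; revert H; apply Rmult_integral_contrapositive; split; auto; apply pow_nonzero; lra.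
Qed.
Section QPochhammer.

Variables (q k : R).
Hypotheses (Hq : 0 < q < 1) (Hk : k < 1).

Lemma qpoch_fin_pos n : 0 < qpoch_fin k q n.
Proof.
  induction n; simpl; [lra|].
  apply Rmult_lt_0_compat; auto; rewrite Rmult_comm; pose proof (pow_mul_lt_1 q n k Hq Hk); lra.
Qed.

(* factor by factor from 1 + x <= exp x *)
Lemma qpoch_fin_le_exp n : k <= 0 -> qpoch_fin k q n <= exp (- k * ((1 - q ^ n) / (1 - q))).
Proof.
  intros Hk0; induction n; simpl.
  - replace (- k * ((1 - 1) / (1 - q))) with 0 by (field; lra); rewrite exp_0; lra.
  - replace (- k * ((1 - q * q ^ n) / (1 - q)))
      with (- k * ((1 - q ^ n) / (1 - q)) + - k * q ^ n) by (field; lra).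
    rewrite exp_plus; pose proof (exp_ineq1_le (- k * q ^ n)); pose proof (qpoch_fin_pos n).
    destruct (pow_in_0_1 q n Hq); apply Rmult_le_compat; nra.
Qed.

(* exp (y/(1-y)) >= 1 + y/(1-y) = 1/(1-y) *)
Lemma exp_le_1_sub y : 0 <= y < 1 -> exp (- (y / (1 - y))) <= 1 - y.
Proof.
  intros Hy; rewrite exp_Ropp.
  pose proof (exp_ineq1_le (y / (1 - y))); pose proof (exp_pos (y / (1 - y))).
  replace (1 + y / (1 - y)) with (/ (1 - y)) in H by (field; lra).
  apply (Rmult_le_reg_l (/ (1 - y))); [apply Rinv_0_lt_compat; lra|].
  rewrite Rinv_l by lra.
  apply (Rmult_le_reg_r (exp (y / (1 - y)))); [auto|].
  rewrite Rmult_assoc, Rinv_l by lra; lra.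
Qed.

Lemma exp_le_qpoch_fin n : 0 <= k ->
  exp (- (k / (1 - k)) * ((1 - q ^ n) / (1 - q))) <= qpoch_fin k q n.
Proof.
  intros Hk0; induction n; simpl.
  - replace (- (k / (1 - k)) * ((1 - 1) / (1 - q))) with 0 by (field; lra); rewrite exp_0; lra.
  - destruct (pow_in_0_1 q n Hq).
    replace (- (k / (1 - k)) * ((1 - q * q ^ n) / (1 - q))) with
      (- (k / (1 - k)) * ((1 - q ^ n) / (1 - q)) + - ((k * q ^ n) / (1 - k))) by (field; lra).
    rewrite exp_plus.
    assert (Hy : exp (- ((k * q ^ n) / (1 - k))) <= 1 - k * q ^ n).
    { eapply Rle_trans; [|apply exp_le_1_sub; nra].
      apply exp_le_mono, Ropp_le_contravar.
      apply Rmult_le_compat_l; [nra|].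
      apply Rinv_le_contravar; nra. }
    apply Rmult_le_compat; auto; left; apply exp_pos.
Qed.

Lemma qpoch_fin_cvg : exists l, 0 < l /\ is_lim_seq (qpoch_fin k q) l.
Proof.
  destruct (Rle_lt_dec k 0) as [Hk0|Hk0].
  - assert (Hinc : forall n, qpoch_fin k q n <= qpoch_fin k q (S n)).
    { intros n; simpl; pose proof (qpoch_fin_pos n); destruct (pow_in_0_1 q n Hq).
      assert (0 <= qpoch_fin k q n * (- k * q ^ n)) by (apply Rmult_le_pos; nra); nra. }
    assert (Hub : forall n, qpoch_fin k q n <= exp (- k / (1 - q))).
    { intros n; eapply Rle_trans; [apply qpoch_fin_le_exp; auto|].
      apply exp_le_mono; destruct (pow_in_0_1 q n Hq).
      assert (0 < / (1 - q)) by (apply Rinv_0_lt_compat; lra).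
      assert (0 <= - k * (q ^ n * / (1 - q))) by (apply Rmult_le_pos; nra).
      unfold Rdiv; nra. }
    destruct (ex_finite_lim_seq_incr _ _ Hinc Hub) as [l Hl].
    exists l; split; auto.
    pose proof (is_lim_seq_incr_compare _ _ Hl Hinc 0); simpl in *; lra.
  - assert (Hdec : forall n, qpoch_fin k q (S n) <= qpoch_fin k q n).
    { intros n; simpl; pose proof (qpoch_fin_pos n); destruct (pow_in_0_1 q n Hq).
      assert (0 <= qpoch_fin k q n * (k * q ^ n)) by (apply Rmult_le_pos; nra); nra. }
    set (m := exp (- (k / (1 - k)) * / (1 - q))).
    assert (Hlb : forall n, m <= qpoch_fin k q n).
    { intros n; eapply Rle_trans; [|apply exp_le_qpoch_fin; lra].
      apply exp_le_mono; destruct (pow_in_0_1 q n Hq).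
      assert (0 < k / (1 - k)) by (apply Rdiv_lt_0_compat; lra).
      assert (0 < / (1 - q)) by (apply Rinv_0_lt_compat; lra).
      assert (0 <= k / (1 - k) * (q ^ n * / (1 - q))) by (apply Rmult_le_pos; nra).
      unfold Rdiv in *; nra. }
    destruct (ex_finite_lim_seq_decr _ _ Hdec Hlb) as [l Hl].
    exists l; split; auto.
    pose proof (is_lim_seq_le (fun _ => m) _ m l Hlb (is_lim_seq_const m) Hl).
    assert (0 < m) by apply exp_pos; simpl in *; lra.
Qed.

Lemma qpoch_inf_spec : 0 < qpoch_inf k q /\ is_lim_seq (qpoch_fin k q) (qpoch_inf k q).
Proof.
  destruct qpoch_fin_cvg as [l [Hl Hlim]]; unfold qpoch_inf.
  replace (Lim_seq (fun n => qpoch_fin k q n)) with (Finite l)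
    by (symmetry; apply is_lim_seq_unique; exact Hlim).
  simpl; auto.
Qed.

Lemma qpoch_inf_pos : 0 < qpoch_inf k q.
Proof. apply qpoch_inf_spec. Qed.

End QPochhammer.

Lemma qpoch_fin_add k q N M :
  qpoch_fin k q (N + M) = qpoch_fin k q N * qpoch_fin (q ^ N * k) q M.
Proof.
  induction M as [|M IHM]; [rewrite Nat.add_0_r; simpl; ring|].
  rewrite Nat.add_succ_r; simpl; rewrite IHM, pow_add; ring.
Qed.

Lemma qpoch_inf_shift k q N : 0 < q < 1 -> k < 1 ->
  qpoch_inf k q = qpoch_fin k q N * qpoch_inf (q ^ N * k) q.
Proof.
  intros Hq Hk.
  destruct (qpoch_inf_spec q k Hq Hk) as [_ H1].
  destruct (qpoch_inf_spec q (q ^ N * k) Hq (pow_mul_lt_1 q N k Hq Hk)) as [_ H2].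
  apply (is_lim_seq_unique_R (fun M => qpoch_fin k q (M + N))).
  - apply (is_lim_seq_incr_n (qpoch_fin k q) N); auto.
  - apply is_lim_seq_ext with (fun M => qpoch_fin k q N * qpoch_fin (q ^ N * k) q M).
    { intros M; now rewrite Nat.add_comm, qpoch_fin_add. }
    apply is_lim_seq_mult'; [apply is_lim_seq_const|auto].
Qed.

Lemma qpoch_inf_rec k q : 0 < q < 1 -> k < 1 ->
  qpoch_inf k q = (1 - k) * qpoch_inf (q * k) q.
Proof.
  intros Hq Hk; rewrite (qpoch_inf_shift k q 1) by auto; simpl.
  f_equal; [ring|f_equal; ring].
Qed.

Lemma is_lim_seq_qpoch_inf_geom k q : 0 < q < 1 -> k < 1 ->
  is_lim_seq (fun N => qpoch_inf (q ^ N * k) q) 1.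
Proof.
  intros Hq Hk; destruct (qpoch_inf_spec q k Hq Hk) as [Hp Hl].
  apply is_lim_seq_ext with (fun N => qpoch_inf k q / qpoch_fin k q N).
  { intros N; rewrite (qpoch_inf_shift k q N) at 1 by auto.
    field; apply Rgt_not_eq, qpoch_fin_pos; auto. }
  replace (Finite 1) with (Finite (qpoch_inf k q / qpoch_inf k q)) by (f_equal; field; lra).
  apply is_lim_seq_div'; [apply is_lim_seq_const|auto|lra].
Qed.

Section Weight.

Variables q a b a2 b2 : R.
Hypothesis Hq : 0 < q < 1.

Definition rhof x := (qpoch_inf (q * x / a) q * qpoch_inf (q * x / b) q)
                     / (qpoch_inf (x / a2) q * qpoch_inf (x / b2) q).

(* the four q-Pochhammer arguments of rhof are < 1, so the products are positive *)
Definition admissible x := x / a2 < 1 /\ x / b2 < 1 /\ q * x / a < 1 /\ q * x / b < 1.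

Lemma admissible_geom c N : admissible c -> admissible (q ^ N * c).
Proof.
  intros (H1 & H2 & H3 & H4); unfold admissible.
  replace ((q ^ N * c) / a2) with (q ^ N * (c / a2)) by (unfold Rdiv; ring).
  replace ((q ^ N * c) / b2) with (q ^ N * (c / b2)) by (unfold Rdiv; ring).
  replace (q * (q ^ N * c) / a) with (q ^ N * (q * c / a)) by (unfold Rdiv; ring).
  replace (q * (q ^ N * c) / b) with (q ^ N * (q * c / b)) by (unfold Rdiv; ring).
  repeat split; apply pow_mul_lt_1; auto.
Qed.

Lemma admissible_endpoints : a2 < a -> a < 0 -> 0 < b -> b < b2 ->
  admissible a /\ admissible b.
Proof.
  intros Ha2a Ha Hb Hbb2.
  assert (a < q * a < 0 /\ 0 < q * b < b) as [[] []] by (split; split; nra).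
  split; repeat split; apply div_lt_1; lra.
Qed.

Lemma rhof_pos x : admissible x -> 0 < rhof x.
Proof.
  intros (H1 & H2 & H3 & H4); unfold rhof.
  apply Rdiv_lt_0_compat; apply Rmult_lt_0_compat; apply qpoch_inf_pos; auto.
Qed.

Lemma is_lim_seq_rhof_geom c : admissible c -> is_lim_seq (fun N => rhof (q ^ N * c)) 1.
Proof.
  intros (H1 & H2 & H3 & H4); unfold rhof.
  assert (Hgeom : forall k, k < 1 -> forall g : nat -> R,
    (forall N, g N = q ^ N * k) -> is_lim_seq (fun N => qpoch_inf (g N) q) 1).
  { intros k Hk g Hg; apply is_lim_seq_ext with (fun N => qpoch_inf (q ^ N * k) q).
    - intros; now rewrite Hg.
    - apply is_lim_seq_qpoch_inf_geom; auto. }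
  replace (Finite 1) with (Finite ((1 * 1) / (1 * 1))) by (f_equal; field).
  apply is_lim_seq_div'; [apply is_lim_seq_mult'..|lra].
  - apply (Hgeom (q * c / a)); auto; intros; unfold Rdiv; ring.
  - apply (Hgeom (q * c / b)); auto; intros; unfold Rdiv; ring.
  - apply (Hgeom (c / a2)); auto; intros; unfold Rdiv; ring.
  - apply (Hgeom (c / b2)); auto; intros; unfold Rdiv; ring.
Qed.

Lemma rhof_pearson S K x : a <> 0 -> b <> 0 -> a2 <> 0 -> b2 <> 0 ->
  K * a2 * b2 = q * S * a * b -> admissible x ->
  q * rhof (q * x) * (S * (q * x - a) * (q * x - b)) = rhof x * (K * (x - a2) * (x - b2)).
Proof.
  intros Ha Hb Ha2 Hb2 HK (H1 & H2 & H3 & H4); unfold rhof.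
  rewrite (qpoch_inf_rec (q * x / a)), (qpoch_inf_rec (q * x / b)),
    (qpoch_inf_rec (x / a2)), (qpoch_inf_rec (x / b2)) by auto.
  replace (q * (q * x) / a) with (q * (q * x / a)) by (unfold Rdiv; ring).
  replace (q * (q * x) / b) with (q * (q * x / b)) by (unfold Rdiv; ring).
  replace (q * x / a2) with (q * (x / a2)) by (unfold Rdiv; ring).
  replace (q * x / b2) with (q * (x / b2)) by (unfold Rdiv; ring).
  assert (P1 : 0 < qpoch_inf (q * (x / a2)) q)
    by (apply qpoch_inf_pos; auto; pose proof (pow_mul_lt_1 q 1 _ Hq H1); simpl in *; lra).
  assert (P2 : 0 < qpoch_inf (q * (x / b2)) q)
    by (apply qpoch_inf_pos; auto; pose proof (pow_mul_lt_1 q 1 _ Hq H2); simpl in *; lra).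
  assert (a2 - x <> 0) by (intros E; replace x with a2 in H1 by lra; rewrite Rdiv_diag in H1; lra).
  assert (b2 - x <> 0) by (intros E; replace x with b2 in H2 by lra; rewrite Rdiv_diag in H2; lra).
  replace K with (q * S * a * b / (a2 * b2))
    by (rewrite <- HK; field; split; auto).
  field; repeat split; auto; lra.
Qed.

End Weight.

Section QDifferenceEquation.

Variables q s0 s1 s2 t0 t1 : R.
Hypothesis Hq : 0 < q < 1.

Definition sig1 x := s2 * x ^ 2 + s1 * x + s0.
Definition sig2 x := q * (sig1 x + (1 - / q) * x * (t1 * x + t0)).

(* The q-EHT multiplied by (1-q)^2 x^2, written with the values at x/q, x, qx. *)
Definition qdiff_eqn (f : R -> R) (lam x : R) : Prop :=
  q ^ 2 * sig1 x * (f (x / q) - f x) + sig2 x * (f (q * x) - f x)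
  + (1 - q) ^ 2 * x ^ 2 * lam * f x = 0.

Lemma Dq_form_of_qdiff_eqn f lam x : x <> 0 -> qdiff_eqn f lam x ->
  sig1 x * Dq (/ q) (Dq q f) x + (t1 * x + t0) * Dq q f x + lam * f x = 0.
Proof.
  intros Hx E; unfold qdiff_eqn, sig2, sig1 in *.
  assert (Hq0 : q <> 0) by lra.
  assert (Hx' : / q * x <> 0)
    by (apply Rmult_integral_contrapositive; split; auto; apply Rinv_neq_0_compat; auto).
  unfold Dq; destruct (Req_EM_T x 0); [contradiction|].
  destruct (Req_EM_T (/ q * x) 0); [contradiction|].
  replace (q * (/ q * x)) with x by (field; auto).
  replace (x / q) with (/ q * x) in E by (unfold Rdiv; ring).
  transitivity ((q ^ 2 * (s2 * x ^ 2 + s1 * x + s0) * (f (/ q * x) - f x) +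
     q * (s2 * x ^ 2 + s1 * x + s0 + (1 - / q) * x * (t1 * x + t0)) * (f (q * x) - f x) +
     (1 - q) ^ 2 * x ^ 2 * lam * f x) / ((1 - q) ^ 2 * x ^ 2)).
  - field; repeat split; auto; lra.
  - rewrite E; field; split; auto; lra.
Qed.

(* At x = 0 the equation follows by continuity, the q-derivatives being polynomials. *)
Lemma Dq_form_peval c n lam : (forall x, qdiff_eqn (peval c (S (S n))) lam x) ->
  forall x, sig1 x * Dq (/ q) (Dq q (peval c (S (S n)))) x
            + (t1 * x + t0) * Dq q (peval c (S (S n))) x + lam * peval c (S (S n)) x = 0.
Proof.
  intros E x; destruct (Req_EM_T x 0) as [->|Hx]; [|apply Dq_form_of_qdiff_eqn; auto].
  assert (Hinv : / q <> 1) by (intros H; rewrite <- (Rinv_inv q), H, Rinv_1 in Hq; lra).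
  set (h y := sig1 y * Dq (/ q) (Dq q (peval c (S (S n)))) y
              + (t1 * y + t0) * Dq q (peval c (S (S n))) y + lam * peval c (S (S n)) y).
  change (h 0 = 0); apply ex_derive_zero_punctured.
  - apply (ex_derive_ext (fun y => sig1 y * peval (qderiv_coef (/ q) (qderiv_coef q c)) n y
              + (t1 * y + t0) * peval (qderiv_coef q c) (S n) y + lam * peval c (S (S n)) y)).
    { intros y; unfold h; rewrite !Dq_peval by (auto; lra); reflexivity. }
    unfold sig1; auto_derive; repeat split; apply ex_derive_peval.
  - intros y Hy; apply Dq_form_of_qdiff_eqn; auto.
Qed.

(* The operator maps x^k to (1-q)^2 (A_k x^(k+2) + B_k x^(k+1) + C_k x^k). *)
Definition coefA k := (q^2*s2*((/q)^k - 1) + (q*s2 + (q-1)*t1)*(q^k - 1))/(1-q)^2.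
Definition coefB k := (q^2*s1*((/q)^k - 1) + (q*s1 + (q-1)*t0)*(q^k - 1))/(1-q)^2.
Definition coefC k := (q^2*s0*((/q)^k - 1) + q*s0*(q^k - 1))/(1-q)^2.

Lemma qdiff_monomial k x : q^2*sig1 x*((/q)^k - 1) + sig2 x*(q^k - 1)
  = (1-q)^2*(coefA k * x^2 + coefB k * x + coefC k).
Proof. unfold sig2, sig1, coefA, coefB, coefC; field; lra. Qed.

Lemma qdiff_peval c N x lam :
  q^2*sig1 x*(peval c N (x/q) - peval c N x) + sig2 x*(peval c N (q*x) - peval c N x)
  + (1-q)^2*x^2*lam*peval c N x
  = sum_f_R0 (fun k => c k * x^k * ((1-q)^2*(coefA k + lam)*x^2
                                   + (1-q)^2*coefB k*x + (1-q)^2*coefC k)) N.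
Proof.
  assert (Hterm : forall k, q^2*sig1 x*(c k*(x/q)^k - c k*x^k) + sig2 x*(c k*(q*x)^k - c k*x^k)
      + (1-q)^2*x^2*lam*(c k*x^k)
      = c k * x^k * ((1-q)^2*(coefA k + lam)*x^2 + (1-q)^2*coefB k*x + (1-q)^2*coefC k)).
  { intros k; unfold Rdiv; rewrite !Rpow_mult_distr, pow_inv.
    transitivity (c k * x ^ k * (q^2*sig1 x*((/q)^k - 1) + sig2 x*(q^k - 1) + (1-q)^2*x^2*lam));
      [rewrite pow_inv; ring|rewrite qdiff_monomial; ring]. }
  unfold peval; induction N as [|N IHN].
  - simpl; rewrite <- Hterm; ring.
  - rewrite !tech5, <- IHN, <- Hterm; ring.
Qed.

Fixpoint eigcoef_pair (n i : nat) : R * R :=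
  match i with
  | O => (1, 0)
  | S i' => let p := eigcoef_pair n i' in
      (- (fst p * coefB (n - i') + snd p * coefC (S (n - i'))) / (coefA (n - S i') - coefA n),
       fst p)
  end.

(* Coefficients of the monic eigenpolynomial of degree n, computed downwards from
   x^n; eigcoef_pair n i holds the coefficients of x^(n-i) and x^(n-i+1). *)
Definition eigcoef (n k : nat) : R := if Nat.leb k n then fst (eigcoef_pair n (n - k)) else 0.

Lemma eigcoef_gt n k : (n < k)%nat -> eigcoef n k = 0.
Proof. intros H; unfold eigcoef; destruct (Nat.leb_spec k n); [lia|auto]. Qed.

Lemma eigcoef_diag n : eigcoef n n = 1.
Proof. unfold eigcoef; rewrite Nat.leb_refl, Nat.sub_diag; reflexivity. Qed.

Lemma eigcoef_rec n k : (forall j, (j < n)%nat -> coefA j <> coefA n) ->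
  eigcoef n k * (coefA k - coefA n) + eigcoef n (S k) * coefB (S k)
  + eigcoef n (S (S k)) * coefC (S (S k)) = 0.
Proof.
  intros Hd; destruct (Nat.lt_total k n) as [Hlt|[->|Hgt]].
  - set (i := (n - S k)%nat).
    assert (E1 : eigcoef n k = - (fst (eigcoef_pair n i) * coefB (S k)
                 + snd (eigcoef_pair n i) * coefC (S (S k))) / (coefA k - coefA n)).
    { unfold eigcoef; destruct (Nat.leb_spec k n); [|lia].
      replace (n - k)%nat with (S i) by (unfold i; lia); simpl.
      replace (n - i)%nat with (S k) by (unfold i; lia).
      replace (n - S i)%nat with k by (unfold i; lia); reflexivity. }
    assert (E2 : eigcoef n (S k) = fst (eigcoef_pair n i)).
    { unfold eigcoef; destruct (Nat.leb_spec (S k) n); [reflexivity|lia]. }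
    assert (E3 : eigcoef n (S (S k)) = snd (eigcoef_pair n i)).
    { unfold eigcoef; destruct (Nat.leb_spec (S (S k)) n).
      - replace i with (S (n - S (S k))) by (unfold i; lia); reflexivity.
      - replace i with 0%nat by (unfold i; lia); reflexivity. }
    rewrite E1, E2, E3; field; intros H; apply (Hd k Hlt); lra.
  - rewrite eigcoef_diag, !eigcoef_gt by lia; ring.
  - rewrite !eigcoef_gt by lia; ring.
Qed.

Lemma qdiff_eqn_eigpoly n x : (forall j, (j < n)%nat -> coefA j <> coefA n) ->
  qdiff_eqn (peval (eigcoef n) (S (S n))) (- coefA n) x.
Proof.
  intros Hd; unfold qdiff_eqn; rewrite qdiff_peval.
  assert (Hq0 : q <> 0) by lra.
  rewrite (sum_f_R0_shift2 (eigcoef n) (fun k => (1-q)^2*(coefA k + - coefA n))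
           (fun k => (1-q)^2*coefB k) (fun k => (1-q)^2*coefC k));
    [|unfold coefB, coefC; simpl; field; lra..].
  rewrite sum_f_R0_zero; [rewrite !(eigcoef_gt n) by lia; ring|].
  intros k; transitivity ((1 - q) ^ 2 * (eigcoef n k * (coefA k - coefA n)
    + eigcoef n (S k) * coefB (S k) + eigcoef n (S (S k)) * coefC (S (S k))) * x ^ S (S k));
    [ring|rewrite eigcoef_rec by auto; ring].
Qed.

(* Distinct eigenvalues: A_n - A_k = q s2 (q^k - q^n) (q^(1-k-n) - r) / (1-q)^2. *)
Lemma coefA_lt_neq k n : s2 <> 0 -> 0 < 1 + (1 - / q) * t1 / s2 < 1 ->
  (k < n)%nat -> coefA k <> coefA n.
Proof.
  intros Hs2 Hr Hkn Heq.
  set (r := 1 + (1 - / q) * t1 / s2) in *.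
  set (u := q ^ k); set (v := q ^ n).
  assert (Hq0 : q <> 0) by lra.
  assert (Hu : 0 < u <= 1) by (apply pow_in_0_1; auto).
  assert (Hv : 0 < v) by (apply pow_lt; lra).
  assert (Hvu : v < u).
  { unfold u, v; replace n with (k + (n - k))%nat by lia; rewrite pow_add.
    assert (q ^ (n - k) < 1) by (apply pow_lt_1_compat; [lra|lia]).
    assert (0 < q ^ k) by (apply pow_lt; lra); nra. }
  assert (Hvq : v <= q).
  { unfold v; replace n with (S (n - 1)) by lia; simpl.
    destruct (pow_in_0_1 q (n - 1) Hq); nra. }
  assert (E : coefA n - coefA k = q * s2 * (u - v) * (q / (u * v) - r) / (1 - q) ^ 2).
  { unfold coefA, r; rewrite !pow_inv; fold u v; field; repeat split; lra. }
  assert (Hgap : 1 <= q / (u * v)).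
  { apply (Rmult_le_reg_r (u * v)); [nra|].
    unfold Rdiv; rewrite Rmult_assoc, Rinv_l by nra; nra. }
  rewrite Heq, Rminus_diag in E; symmetry in E.
  unfold Rdiv in E; apply Rmult_integral in E as [E|E].
  - repeat (apply Rmult_integral in E as [E|E]); lra.
  - revert E; apply Rinv_neq_0_compat, pow_nonzero; lra.
Qed.

Lemma coefA_inj k n : s2 <> 0 -> 0 < 1 + (1 - / q) * t1 / s2 < 1 ->
  k <> n -> coefA k <> coefA n.
Proof.
  intros Hs2 Hr H; destruct (Nat.lt_total k n) as [h|[h|h]]; [|lia|].
  - apply coefA_lt_neq; auto.
  - intros E; symmetry in E; revert E; apply coefA_lt_neq; auto.
Qed.

Lemma lambda_eq_coefA n :
  - qnum q (Z.of_nat n) * (t1 + / 2 * qnum (/ q) (Z.of_nat n - 1) * (2 * s2)) = - coefA n.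
Proof.
  assert (q <> 0) by lra.
  unfold qnum, coefA; destruct n.
  - simpl; field; lra.
  - replace (Z.of_nat (S n) - 1)%Z with (Z.of_nat n) by lia.
    rewrite <- !pow_powerRZ, !pow_inv.
    assert (q ^ n <> 0) by (apply pow_nonzero; auto).
    simpl; field; repeat split; auto; lra.
Qed.


Definition green_flux (rho f g : R -> R) (x : R) : R :=
  rho x * sig2 x * (f x * g (q * x) - g x * f (q * x)) / x.

(* Subtract g y times the equation for f from f y times the equation for g. *)
Lemma green_local rho f g lf lg y : y <> 0 -> qdiff_eqn f lf y -> qdiff_eqn g lg y ->
  (1 - q) ^ 2 * (lf - lg) * (y * rho y * f y * g y)
  = green_flux rho f g y - q ^ 2 * sig1 y * rho y * (f (y / q) * g y - g (y / q) * f y) / y.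
Proof.
  intros Hy Ef Eg; unfold qdiff_eqn, green_flux in *.
  apply Rminus_diag_uniq.
  transitivity (rho y / y * (g y * (q ^ 2 * sig1 y * (f (y / q) - f y)
        + sig2 y * (f (q * y) - f y) + (1 - q) ^ 2 * y ^ 2 * lf * f y)
      - f y * (q ^ 2 * sig1 y * (g (y / q) - g y)
        + sig2 y * (g (q * y) - g y) + (1 - q) ^ 2 * y ^ 2 * lg * g y))).
  - field; auto.
  - rewrite Ef, Eg; ring.
Qed.

(* Telescoping: at q^(N+1) c the Pearson equation turns the last term of green_local
   into the flux at q^N c, and at c that term vanishes because sig1 c = 0. *)
Lemma green_identity rho f g lf lg c : c <> 0 -> sig1 c = 0 ->
  (forall N, q * rho (q ^ S N * c) * sig1 (q ^ S N * c)
             = rho (q ^ N * c) * sig2 (q ^ N * c)) ->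
  (forall x, qdiff_eqn f lf x) -> (forall x, qdiff_eqn g lg x) ->
  forall N, (1 - q) ^ 2 * (lf - lg) * c
              * sum_f_R0 (jackson_right q (fun x => f x * g x * rho x) c) N
            = green_flux rho f g (q ^ N * c).
Proof.
  intros Hc Hs Hp Ef Eg.
  assert (Hq0 : q <> 0) by lra.
  assert (HX : forall j, q ^ j * c <> 0)
    by (intros j; apply Rmult_integral_contrapositive; split; auto; apply pow_nonzero; auto).
  unfold jackson_right; induction N as [|N IHN].
  - simpl sum_f_R0; rewrite !pow_O, !Rmult_1_l.
    transitivity ((1 - q) ^ 2 * (lf - lg) * (c * rho c * f c * g c)); [ring|].
    rewrite green_local, Hs by auto; unfold Rdiv; ring.
  - rewrite tech5, Rmult_plus_distr_l, IHN.
    transitivity (green_flux rho f g (q ^ N * c)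
      + (1 - q) ^ 2 * (lf - lg) * (q ^ S N * c * rho (q ^ S N * c)
         * f (q ^ S N * c) * g (q ^ S N * c))); [ring|].
    rewrite green_local by auto.
    replace (q ^ S N * c / q) with (q ^ N * c) by (simpl; field; auto).
    unfold green_flux; rewrite <- Hp.
    replace (q ^ S N * c) with (q * (q ^ N * c)) by (simpl; ring).
    field; repeat split; auto; apply pow_nonzero; auto.
Qed.

(* The limit does not depend on c: this makes the two halves of the Jackson integral cancel. *)
Lemma is_lim_seq_green_flux rho cf cg m n c : c <> 0 ->
  is_lim_seq (fun N => rho (q ^ N * c)) 1 ->
  is_lim_seq (fun N => green_flux rho (peval cf (S m)) (peval cg (S n)) (q ^ N * c))
    (q * s0 * (q - 1) * (cf 0%nat * cg 1%nat - cg 0%nat * cf 1%nat)).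
Proof.
  intros Hc Hr.
  assert (Hu : is_lim_seq (fun N => q ^ N * c) 0) by (apply is_lim_seq_geom_mul; auto).
  assert (Hv : is_lim_seq (fun N => q * (q ^ N * c)) 0).
  { apply is_lim_seq_ext with (fun N => q ^ N * (q * c)); [intros; ring|].
    apply is_lim_seq_geom_mul; auto. }
  set (F := peval (shiftc cf) m); set (G := peval (shiftc cg) n).
  apply is_lim_seq_ext with (fun N => rho (q ^ N * c) * sig2 (q ^ N * c) *
     (q * cf 0%nat * G (q * (q ^ N * c)) + F (q ^ N * c) * peval cg (S n) (q * (q ^ N * c))
      - q * cg 0%nat * F (q * (q ^ N * c)) - G (q ^ N * c) * peval cf (S m) (q * (q ^ N * c)))).
  { intros N; unfold green_flux; rewrite !peval_S; fold F G.
    field; split; [auto|apply pow_nonzero; lra]. }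
  replace (q * s0 * (q - 1) * (cf 0%nat * cg 1%nat - cg 0%nat * cf 1%nat))
    with (1 * sig2 0 * (q * cf 0%nat * cg 1%nat + cf 1%nat * cg 0%nat
                        - q * cg 0%nat * cf 1%nat - cg 1%nat * cf 0%nat))
    by (unfold sig2, sig1; ring).
  apply is_lim_seq_mult'; [apply is_lim_seq_mult'; auto|].
  - apply is_lim_seq_ex_derive; auto; unfold sig2, sig1; auto_derive; auto.
  - apply is_lim_seq_minus'; [apply is_lim_seq_minus'; [apply is_lim_seq_plus'|]|];
      apply is_lim_seq_mult'; try apply is_lim_seq_const; apply is_lim_seq_peval_0; auto.
Qed.

End QDifferenceEquation.

Section Orthogonality.

Variables q s0 s1 s2 t0 t1 a b a2 b2 lead1 lead2 : R.
Hypotheses (Hq : 0 < q < 1) (Ha2a : a2 < a) (Ha : a < 0) (Hb : 0 < b) (Hbb2 : b < b2).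
Hypothesis Hsig1 : forall x, sig1 s0 s1 s2 x = lead1 * (x - a) * (x - b).
Hypothesis Hsig2 : forall x, sig2 q s0 s1 s2 t0 t1 x = lead2 * (x - a2) * (x - b2).
Hypotheses (Hs2 : s2 <> 0) (Hr : 0 < 1 + (1 - / q) * t1 / s2 < 1).

Definition eigpoly (n : nat) : R -> R := peval (eigcoef q s0 s1 s2 t0 t1 n) n.

Local Notation rho := (rhof q a b a2 b2).
Local Notation coefA := (coefA q s2 t1).

Lemma eigpoly_deg n : is_poly_deg (eigpoly n) n.
Proof.
  exists (eigcoef q s0 s1 s2 t0 t1 n); split; [rewrite eigcoef_diag; lra|reflexivity].
Qed.

Lemma eigpoly_extend n : eigpoly n = peval (eigcoef q s0 s1 s2 t0 t1 n) (S (S n)).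
Proof.
  apply functional_extensionality; intros y; replace (S (S n)) with (n + 2)%nat by lia.
  symmetry; apply peval_zero_tail, eigcoef_gt.
Qed.

Lemma eigpoly_qdiff_eqn n x : qdiff_eqn q s0 s1 s2 t0 t1 (eigpoly n) (- coefA n) x.
Proof.
  rewrite eigpoly_extend; apply qdiff_eqn_eigpoly; auto.
  intros j Hj; apply coefA_lt_neq; auto.
Qed.

Lemma lead2_eq : lead2 * a2 * b2 = q * lead1 * a * b.
Proof.
  assert (H0 : sig2 q s0 s1 s2 t0 t1 0 = q * sig1 s0 s1 s2 0) by (unfold sig2; ring).
  rewrite Hsig1, Hsig2 in H0; lra.
Qed.

Lemma rho_pearson_geom c N : admissible q a b a2 b2 c ->
  q * rho (q ^ S N * c) * sig1 s0 s1 s2 (q ^ S N * c)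
  = rho (q ^ N * c) * sig2 q s0 s1 s2 t0 t1 (q ^ N * c).
Proof.
  intros Hc; rewrite Hsig1, Hsig2.
  replace (q ^ S N * c) with (q * (q ^ N * c)) by (simpl; ring).
  apply rhof_pearson; try lra; [apply lead2_eq|apply admissible_geom; auto].
Qed.

Lemma ex_series_jackson_right_eigpoly m n c : admissible q a b a2 b2 c ->
  ex_series (jackson_right q (fun x => eigpoly n x * eigpoly m x * rho x) c).
Proof.
  intros Hc; apply (ex_series_geom_mul_cvg q _
    (eigcoef q s0 s1 s2 t0 t1 n 0%nat * eigcoef q s0 s1 s2 t0 t1 m 0%nat * 1)); auto.
  assert (Hu : is_lim_seq (fun N => q ^ N * c) 0) by (apply is_lim_seq_geom_mul; auto).
  apply is_lim_seq_mult'; [apply is_lim_seq_mult'|apply is_lim_seq_rhof_geom; auto];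
    apply is_lim_seq_peval_0; auto.
Qed.

Definition flux_limit m n : R :=
  let cf := eigcoef q s0 s1 s2 t0 t1 n in let cg := eigcoef q s0 s1 s2 t0 t1 m in
  q * s0 * (q - 1) * (cf 0%nat * cg 1%nat - cg 0%nat * cf 1%nat).

Lemma is_series_jackson_right_eigpoly m n c : admissible q a b a2 b2 c -> c <> 0 ->
  sig1 s0 s1 s2 c = 0 -> m <> n ->
  is_series (jackson_right q (fun x => eigpoly n x * eigpoly m x * rho x) c)
    (flux_limit m n / ((1 - q) ^ 2 * (coefA m - coefA n) * c)).
Proof.
  intros Hc Hc0 Hsc Hmn.
  assert (HK : (1 - q) ^ 2 * (coefA m - coefA n) * c <> 0).
  { assert ((1 - q) ^ 2 <> 0) by (apply pow_nonzero; lra).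
    assert (coefA m - coefA n <> 0) by (apply Rminus_eq_contra, coefA_inj; auto).
    repeat apply Rmult_integral_contrapositive; repeat split; auto. }
  apply is_series_of_sum_f_R0.
  apply is_lim_seq_ext with (fun N => green_flux q s0 s1 s2 t0 t1 rho (eigpoly n) (eigpoly m)
    (q ^ N * c) / ((1 - q) ^ 2 * (coefA m - coefA n) * c)).
  { intros N; rewrite <- (green_identity q s0 s1 s2 t0 t1 Hq rho (eigpoly n) (eigpoly m)
      (- coefA n) (- coefA m) c Hc0 Hsc (fun N' => rho_pearson_geom c N' Hc)
      (eigpoly_qdiff_eqn n) (eigpoly_qdiff_eqn m)).
    replace (- coefA n - - coefA m) with (coefA m - coefA n) by ring.
    unfold Rdiv; rewrite Rmult_comm, <- Rmult_assoc, Rinv_l, Rmult_1_l; auto. }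
  apply is_lim_seq_div'; [|apply is_lim_seq_const|auto].
  rewrite !eigpoly_extend; apply is_lim_seq_green_flux; auto; apply is_lim_seq_rhof_geom; auto.
Qed.

Lemma jackson_eigpoly_orth m n : m <> n ->
  jackson q (fun x => eigpoly n x * eigpoly m x * rho x) a b = 0.
Proof.
  intros Hmn; unfold jackson.
  destruct (admissible_endpoints q a b a2 b2 Hq Ha2a Ha Hb Hbb2) as [Hadma Hadmb].
  assert (Hs : forall c, c = a \/ c = b -> sig1 s0 s1 s2 c = 0)
    by (intros c [->| ->]; rewrite Hsig1; ring).
  rewrite (is_series_unique _ _ (is_series_jackson_right_eigpoly m n b Hadmb ltac:(lra)
             (Hs b ltac:(auto)) Hmn)).
  rewrite (is_series_unique _ _ (is_series_jackson_right_eigpoly m n a Hadma ltac:(lra)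
             (Hs a ltac:(auto)) Hmn)).
  assert (coefA m - coefA n <> 0) by (apply Rminus_eq_contra, coefA_inj; auto).
  field; repeat split; try lra; apply pow_nonzero; lra.
Qed.

Lemma jackson_eigpoly_norm_pos n :
  0 < jackson q (fun x => eigpoly n x * eigpoly n x * rho x) a b.
Proof.
  destruct (admissible_endpoints q a b a2 b2 Hq Ha2a Ha Hb Hbb2) as [Hadma Hadmb].
  set (F := fun x => eigpoly n x * eigpoly n x * rho x).
  assert (Hnn : forall c j, admissible q a b a2 b2 c -> 0 <= jackson_right q F c j).
  { intros c j Hc; unfold jackson_right, F.
    pose proof (rhof_pos q a b a2 b2 Hq _ (admissible_geom q a b a2 b2 Hq c j Hc)).
    pose proof (pow_lt q j ltac:(lra)); pose proof (Rle_0_sqr (eigpoly n (q ^ j * c))).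
    unfold Rsqr in *; apply Rmult_le_pos; [|apply Rmult_le_pos]; lra. }
  destruct (peval_geom_nonzero q b n (eigcoef q s0 s1 s2 t0 t1 n) Hq ltac:(lra))
    as [j Hj]; [rewrite eigcoef_diag; lra|].
  assert (Hpos : 0 < jackson_right q F b j).
  { unfold jackson_right, F.
    pose proof (rhof_pos q a b a2 b2 Hq _ (admissible_geom q a b a2 b2 Hq b j Hadmb)).
    pose proof (pow_lt q j ltac:(lra)); pose proof (Rlt_0_sqr _ Hj).
    unfold Rsqr in *; apply Rmult_lt_0_compat; [|apply Rmult_lt_0_compat]; auto. }
  pose proof (is_series_ge_term _ _ j
    (Series_correct _ (ex_series_jackson_right_eigpoly n n b Hadmb))
    (fun k => Hnn b k Hadmb)).
  pose proof (is_series_ge_term _ _ 0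
    (Series_correct _ (ex_series_jackson_right_eigpoly n n a Hadma))
    (fun k => Hnn a k Hadma)).
  pose proof (Hnn a 0%nat Hadma).
  unfold jackson, F in *.
  assert (0 < (1 - q) * b) by (apply Rmult_lt_0_compat; lra).
  assert (0 < (1 - q) * - a) by (apply Rmult_lt_0_compat; lra).
  nra.
Qed.

End Orthogonality.

Theorem theorem4p2 (q s0 s1 s2 t0 t1 a1 b1 a2 b2 : R) :
  0 < q < 1 ->
  t1 <> 0 ->
  2 * s2 <> 0 ->
  (forall x, s2 * x ^ 2 + s1 * x + s0 = / 2 * (2 * s2) * (x - a1) * (x - b1)) ->
  2 * q * (s2 + (1 - / q) * t1) <> 0 ->
  (forall x, q * ((s2 * x ^ 2 + s1 * x + s0) + (1 - / q) * x * (t1 * x + t0))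
             = / 2 * (2 * q * (s2 + (1 - / q) * t1)) * (x - a2) * (x - b2)) ->
  a2 < a1 -> a1 < 0 -> 0 < b1 -> b1 < b2 ->
  (let Lambda := / q ^ 2 * (1 + (1 - / q) * t1 / (/ 2 * (2 * s2))) in
   0 < q ^ 2 * Lambda < 1) ->
  let sigma1 := fun x => s2 * x ^ 2 + s1 * x + s0 in
  let tau := fun x => t1 * x + t0 in
  let lambda := fun n : nat =>
    - qnum q (Z.of_nat n) * (t1 + / 2 * qnum (/ q) (Z.of_nat n - 1) * (2 * s2)) in
  let a := a1 in
  let b := b1 in
  let rho := fun x =>
    (qpoch_inf (q * x / a) q * qpoch_inf (q * x / b) q)
    / (qpoch_inf (x / a2) q * qpoch_inf (x / b2) q) in
  exists (P : nat -> R -> R) (d2 : nat -> R),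
    (forall n, is_poly_deg (P n) n) /\
    (forall n x, sigma1 x * Dq (/ q) (Dq q (P n)) x + tau x * Dq q (P n) x
                 + lambda n * P n x = 0) /\
    (forall n, d2 n <> 0) /\
    (forall m n, jackson_ex q (fun x => P n x * P m x * rho x) a b /\
                 jackson q (fun x => P n x * P m x * rho x) a b
                 = if Nat.eq_dec m n then d2 n else 0).
Proof.
  intros Hq _ Hs2 Hsig1 _ Hsig2 Ha2a Ha Hb Hbb2 HL sigma1 tau lambda a b rho.
  assert (Hr : 0 < 1 + (1 - / q) * t1 / s2 < 1).
  { replace (1 + (1 - / q) * t1 / s2)
      with (q ^ 2 * (/ q ^ 2 * (1 + (1 - / q) * t1 / (/ 2 * (2 * s2))))); [exact HL|].
    field; split; lra. }
  assert (Hs2' : s2 <> 0) by lra.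
  assert (Hsig1' : forall x, sig1 s0 s1 s2 x = / 2 * (2 * s2) * (x - a) * (x - b))
    by exact Hsig1.
  assert (Hsig2' : forall x, sig2 q s0 s1 s2 t0 t1 x
                             = / 2 * (2 * q * (s2 + (1 - / q) * t1)) * (x - a2) * (x - b2))
    by exact Hsig2.
  pose proof (admissible_endpoints q a b a2 b2 Hq Ha2a Ha Hb Hbb2) as Hadm.
  set (P := eigpoly q s0 s1 s2 t0 t1).
  exists P, (fun n => jackson q (fun x => P n x * P n x * rho x) a b).
  split; [|split; [|split]].
  - intros n; apply eigpoly_deg.
  - intros n x; unfold lambda; rewrite lambda_eq_coefA by auto.
    unfold P; rewrite eigpoly_extend; apply Dq_form_peval; auto.
    rewrite <- eigpoly_extend; intros y; eapply eigpoly_qdiff_eqn; eauto.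
  - intros n; apply Rgt_not_eq; eapply jackson_eigpoly_norm_pos; eauto.
  - intros m n; split; [split; eapply ex_series_jackson_right_eigpoly; eauto; apply Hadm|].
    destruct (Nat.eq_dec m n) as [->|Hmn]; [reflexivity|].
    eapply jackson_eigpoly_orth; eauto.
Qed.
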